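(* (a) For an integer $k\ge2$, let $P_k(x)=-\left(x+\frac{k-1}{2}\right)\left(x-\frac{k-1}{2}\right)\prod_{i=1}^{k-1}\left(x-\left(i-\frac k2\right)\right)^2$, $r_0=\frac{1-k}{2}$, $r_1=\frac{k-1}{2}$, $Z_k=(X_k,Y_k)$ with $X_k(x,y)=(1,P_k'(x))$ for $y\ge0$, $Y_k(x,y)=(-1,P_k'(x))$ for $y\le0$, and $\Lambda_k=\{(x,P_k(x)):r_0\le x\le r_1\}\cup\{(x,-P_k(x)):r_0\le x\le r_1\}$. Then $\Lambda_k$ is an invariant set for $Z_k$. (b) Let $Z_\infty$ have $X_\infty(x,y)=(1,2\sin(2\pi x))$ for $y\ge0$, $Y_\infty(x,y)=(-1,2\sin(2\pi x))$ for $y\le0$, and $\Lambda_\infty=\{(x,\pm P_\infty(x)):x\in\mathbb{R}\}$ with $P_\infty(x)=\frac{1-\cos(2\pi x)}{\pi}$. Then $\Lambda_\infty$ is an invariant set for $Z_\infty$.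
   Context: Switching manifold $\Sigma=\{y=0\}=f^{-1}(0)$, $f(x,y)=y$; a PSVF $Z=(X,Y)$ uses $X$ on $\{y\ge0\}$, $Y$ on $\{y\le0\}$. With $Wf=\langle\nabla f,W\rangle$, $W^2f=\langle\nabla(Wf),W\rangle$: crossing region $\Sigma^c=\{Xf\cdot Yf>0\}$ ($\Sigma^{c+}$ both $>0$, $\Sigma^{c-}$ both $<0$), sliding $\Sigma^s=\{Xf<0<Yf\}$, escaping $\Sigma^e=\{Yf<0<Xf\}$, sliding field $Z^T=(Yf\,X-Xf\,Y)/(Yf-Xf)$ on their closure. Tangential singularities: points of $\Sigma$ with $Xf=0$ or $Yf=0$; singular if invisible for both fields ($X^2f<0$ and $Y^2f>0$), regular otherwise. Local trajectories (Filippov convention): off $\Sigma$ follow $X$ or $Y$; through $\Sigma^{c+}$ follow $Y$ for $t\le0$ and $X$ for $t\ge0$ (reversed for $\Sigma^{c-}$); through $\Sigma^e$ follow $Z^T$ for $t\le0$ and one of $X,Y,Z^T$ for $t\ge0$ (reversed for $\Sigma^s$); through a regular tangency follow one of the flows of $X,Y,Z^T$ for $t\le0$ and one of them for $t\ge0$; singular tangencies are stationary. A global trajectory is a map $\gamma:\mathbb{R}\to\mathbb{R}^2$ concatenating orientation-preserving local trajectories $\sigma_i$ on $[t_i,t_{i+1}]$, $i\in\mathbb{Z}$, with $\sigma_i(t_{i+1})=\sigma_{i+1}(t_{i+1})$ and $t_i\to\pm\infty$. A set $\Lambda$ is invariant for $Z$ if every global trajectory $\gamma$ of $Z$ with $\gamma(0)\in\Lambda$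 satisfies $\gamma(\mathbb{R})\subset\Lambda$. *)

From Stdlib Require Import Reals Lra ZArith.
From Coquelicot Require Import Coquelicot.
Open Scope R_scope.

Definition pt := (R * R)%type.
Definition vfield := pt -> pt.

(* A piecewise smooth vector field Z = (X, Y) with switching manifold
   Sigma = {y = 0} = f^{-1}(0), f(x,y) = y:
   X is used on {y >= 0}, Y on {y <= 0}. *)
Record PSVF := mkPSVF { fX : vfield ; fY : vfield }.

(* W f = <grad f, W> with f(x,y) = y. *)
Definition Lie1 (W : vfield) (p : pt) : R := snd (W p).

(* W^2 f = <grad (W f), W>. *)
Definition Lie2 (W : vfield) (p : pt) : R :=
  Derive (fun x => Lie1 W (x, snd p)) (fst p) * fst (W p)
  + Derive (fun y => Lie1 W (fst p, y)) (snd p) * snd (W p).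

Definition onSigma (p : pt) : Prop := snd p = 0.

Definition crossing_plus (Z : PSVF) (p : pt) : Prop :=
  onSigma p /\ Lie1 (fX Z) p > 0 /\ Lie1 (fY Z) p > 0.
Definition crossing_minus (Z : PSVF) (p : pt) : Prop :=
  onSigma p /\ Lie1 (fX Z) p < 0 /\ Lie1 (fY Z) p < 0.
Definition sliding (Z : PSVF) (p : pt) : Prop :=
  onSigma p /\ Lie1 (fX Z) p < 0 /\ 0 < Lie1 (fY Z) p.
Definition escaping (Z : PSVF) (p : pt) : Prop :=
  onSigma p /\ Lie1 (fY Z) p < 0 /\ 0 < Lie1 (fX Z) p.

(* closure (in R^2) of Sigma^s \cup Sigma^e *)
Definition in_closure_se (Z : PSVF) (p : pt) : Prop :=
  forall eps, eps > 0 -> exists q : pt,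
    (sliding Z q \/ escaping Z q) /\
    Rabs (fst q - fst p) < eps /\ Rabs (snd q - snd p) < eps.

Definition slidingField (Z : PSVF) : vfield := fun p =>
  let a := Lie1 (fY Z) p in
  let b := Lie1 (fX Z) p in
  ((a * fst (fX Z p) - b * fst (fY Z p)) / (a - b),
   (a * snd (fX Z p) - b * snd (fY Z p)) / (a - b)).

Definition tangency (Z : PSVF) (p : pt) : Prop :=
  onSigma p /\ (Lie1 (fX Z) p = 0 \/ Lie1 (fY Z) p = 0).
Definition singular_tangency (Z : PSVF) (p : pt) : Prop :=
  tangency Z p /\ Lie2 (fX Z) p < 0 /\ Lie2 (fY Z) p > 0.
Definition regular_tangency (Z : PSVF) (p : pt) : Prop :=
  tangency Z p /\ ~ (Lie2 (fX Z) p < 0 /\ Lie2 (fY Z) p > 0).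

(* g has derivative g' at every point of [a,b] (one-sided at the ends). *)
Definition deriv_on (g g' : R -> R) (a b : R) : Prop :=
  forall t, a <= t <= b -> forall eps, eps > 0 -> exists delta, delta > 0 /\
    forall u, a <= u <= b -> u <> t -> Rabs (u - t) < delta ->
      Rabs ((g u - g t) / (u - t) - g' t) < eps.

Definition integral_curve (W : vfield) (sigma : R -> pt) (a b : R) : Prop :=
  deriv_on (fun t => fst (sigma t)) (fun t => fst (W (sigma t))) a b /\
  deriv_on (fun t => snd (sigma t)) (fun t => snd (W (sigma t))) a b.

Definition followsX (Z : PSVF) sigma a b : Prop :=
  integral_curve (fX Z) sigma a b /\ (forall t, a <= t <= b -> snd (sigma t) >= 0).
Definition followsY (Z : PSVF) sigma a b : Prop :=
  integral_curve (fY Z) sigma a b /\ (forall t, a <= t <= b -> snd (sigma t) <= 0).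
Definition followsT (Z : PSVF) sigma a b : Prop :=
  integral_curve (slidingField Z) sigma a b /\
  (forall t, a <= t <= b -> in_closure_se Z (sigma t)).
Definition followsAny (Z : PSVF) sigma a b : Prop :=
  followsX Z sigma a b \/ followsY Z sigma a b \/ followsT Z sigma a b.

(* Local trajectory (Filippov convention) on [a,b], through the point
   p = sigma s for some s in [a,b]. *)
Definition local_trajectory (Z : PSVF) (sigma : R -> pt) (a b : R) : Prop :=
  exists s, a <= s <= b /\
  let p := sigma s in
  (snd p > 0 /\ followsX Z sigma a b) \/
  (snd p < 0 /\ followsY Z sigma a b) \/
  (crossing_plus Z p /\ followsY Z sigma a s /\ followsX Z sigma s b) \/
  (crossing_minus Z p /\ followsX Z sigma a s /\ followsY Z sigma s b) \/
  (escaping Z p /\ followsT Z sigma a s /\ followsAny Z sigma s b) \/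
  (sliding Z p /\ followsAny Z sigma a s /\ followsT Z sigma s b) \/
  (regular_tangency Z p /\ followsAny Z sigma a s /\ followsAny Z sigma s b) \/
  (singular_tangency Z p /\ (forall t, a <= t <= b -> sigma t = p)).

Definition global_trajectory (ZZ : PSVF) (gamma : R -> pt) : Prop :=
  exists (ts : Z -> R) (sig : Z -> R -> pt),
    (forall i, ts i < ts (i + 1)%Z) /\
    (forall M, exists N, forall i, (N <= i)%Z -> ts i > M) /\
    (forall M, exists N, forall i, (i <= N)%Z -> ts i < M) /\
    (forall i, local_trajectory ZZ (sig i) (ts i) (ts (i + 1)%Z)) /\
    (forall i, sig i (ts (i + 1)%Z) = sig (i + 1)%Z (ts (i + 1)%Z)) /\
    (forall i t, ts i <= t <= ts (i + 1)%Z -> gamma t = sig i t).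

Definition invariant (Z : PSVF) (L : pt -> Prop) : Prop :=
  forall gamma, global_trajectory Z gamma -> L (gamma 0) -> forall t, L (gamma t).

Fixpoint prod1 (n : nat) (g : nat -> R) : R :=
  match n with O => 1 | S m => prod1 m g * g n end.

Definition Pk (k : nat) (x : R) : R :=
  - ((x + (INR k - 1) / 2) * (x - (INR k - 1) / 2))
  * prod1 (k - 1) (fun i => (x - (INR i - INR k / 2)) ^ 2).

Definition r0 (k : nat) : R := (1 - INR k) / 2.
Definition r1 (k : nat) : R := (INR k - 1) / 2.

Definition Zk (k : nat) : PSVF :=
  mkPSVF (fun p => (1, Derive (Pk k) (fst p)))
         (fun p => (-1, Derive (Pk k) (fst p))).

Definition Lambdak (k : nat) (p : pt) : Prop :=
  exists x, r0 k <= x <= r1 k /\ (p = (x, Pk k x) \/ p = (x, - Pk k x)).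

Definition Pinf (x : R) : R := (1 - cos (2 * PI * x)) / PI.

Definition Zinf : PSVF :=
  mkPSVF (fun p => (1, 2 * sin (2 * PI * fst p)))
         (fun p => (-1, 2 * sin (2 * PI * fst p))).

Definition Lambdainf (p : pt) : Prop :=
  exists x, p = (x, Pinf x) \/ p = (x, - Pinf x).

(* Both halves of Z have horizontal speed +-1 and vertical speed P'(x), so
   y - P(x) is a first integral of X and y + P(x) one of Y. The set Lambda
   consists of the points (x, +-P(x)) with P(x) >= 0 (for P_k this is exactly
   r0 <= x <= r1), i.e. of the level set y = P(x) in {y >= 0} and the level set
   y = -P(x) in {y <= 0}. Since Xf = Yf there are no sliding or escaping
   points, so each piece of a trajectory follows X in {y >= 0}, follows Y in
   {y <= 0}, or is stationary; such a piece stays in Lambda once it meets it,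
   and the pieces of a global trajectory pass this along at their junctions in
   both time directions. *)

From Stdlib Require Import Reals ZArith Lra Lia.
From Coquelicot Require Import Coquelicot.
Open Scope R_scope.

Lemma deriv_on_ext f f' f'' a b :
  deriv_on f f' a b -> (forall t, a <= t <= b -> f' t = f'' t) -> deriv_on f f'' a b.
Proof. intros Hf E t Ht. rewrite <- (E t Ht). now apply Hf. Qed.

Lemma deriv_on_minus f f' g g' a b :
  deriv_on f f' a b -> deriv_on g g' a b ->
  deriv_on (fun t => f t - g t) (fun t => f' t - g' t) a b.
Proof.
  intros Hf Hg t Ht eps Heps.
  destruct (Hf t Ht (eps / 2)) as [d1 [Hd1 Hf1]]; [lra|].
  destruct (Hg t Ht (eps / 2)) as [d2 [Hd2 Hg1]]; [lra|].
  exists (Rmin d1 d2); split; [now apply Rmin_pos|].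
  intros u Hu Hut Hud.
  assert (Hf2 := Hf1 u Hu Hut (Rlt_le_trans _ _ _ Hud (Rmin_l _ _))).
  assert (Hg2 := Hg1 u Hu Hut (Rlt_le_trans _ _ _ Hud (Rmin_r _ _))).
  replace ((f u - g u - (f t - g t)) / (u - t) - (f' t - g' t)) with
    (((f u - f t) / (u - t) - f' t) - ((g u - g t) / (u - t) - g' t))
    by (field; intro; apply Hut; lra).
  eapply Rle_lt_trans; [apply Rabs_triang|]. rewrite Rabs_Ropp. lra.
Qed.

Lemma is_derive_deriv_on f f' a b :
  (forall t, is_derive f t (f' t)) -> deriv_on f f' a b.
Proof.
  intros Hd t _ eps Heps.
  destruct (proj1 (is_derive_Reals f t (f' t)) (Hd t) eps Heps) as [d Hd'].
  exists d; split; [apply cond_pos|].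
  intros u _ Hut Hud.
  specialize (Hd' (u - t) ltac:(lra) Hud).
  now replace (t + (u - t)) with u in Hd' by ring.
Qed.

Lemma deriv_on_continuous f f' a b x :
  deriv_on f f' a b -> a <= x <= b -> forall eps, eps > 0 -> exists delta, delta > 0 /\
    forall u, a <= u <= b -> Rabs (u - x) < delta -> Rabs (f u - f x) < eps.
Proof.
  intros Hd Hx eps Heps.
  destruct (Hd x Hx 1 Rlt_0_1) as [d [Hd0 Hq]].
  set (K := Rabs (f' x) + 1).
  assert (HK : 0 < K) by (unfold K; generalize (Rabs_pos (f' x)); lra).
  exists (Rmin d (eps / K)); split; [apply Rmin_pos; [lra | now apply Rdiv_lt_0_compat]|].
  intros u Hu Hux.
  destruct (Req_dec u x) as [->|Hne]; [now rewrite Rminus_diag, Rabs_R0|].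
  set (q := (f u - f x) / (u - x)).
  assert (Hqb : Rabs q < K).
  { assert (H := Hq u Hu Hne (Rlt_le_trans _ _ _ Hux (Rmin_l _ _))). fold q in H.
    unfold K. replace q with ((q - f' x) + f' x) by ring.
    eapply Rle_lt_trans; [apply Rabs_triang|]. lra. }
  assert (Hux' : Rabs (u - x) < eps / K) by exact (Rlt_le_trans _ _ _ Hux (Rmin_r _ _)).
  replace (f u - f x) with (q * (u - x)) by (unfold q; field; lra).
  rewrite Rabs_mult.
  apply Rlt_le_trans with (K * (eps / K)); [|right; field; lra].
  apply Rmult_le_0_lt_compat; auto using Rabs_pos.
Qed.

Definition clamp (a b t : R) : R := Rmax a (Rmin b t).

Lemma clamp_id a b t : a <= t <= b -> clamp a b t = t.
Proof. intros; unfold clamp, Rmax, Rmin; repeat destruct Rle_dec; lra. Qed.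

Lemma clamp_range a b t : a <= b -> a <= clamp a b t <= b.
Proof. intros; unfold clamp, Rmax, Rmin; repeat destruct Rle_dec; lra. Qed.

Lemma clamp_lipschitz a b x t :
  a <= b -> Rabs (clamp a b x - clamp a b t) <= Rabs (x - t).
Proof.
  intros; unfold clamp, Rmax, Rmin; repeat destruct Rle_dec; unfold Rabs;
    repeat destruct Rcase_abs; lra.
Qed.

Section Clamped.
Variables (f f' : R -> R) (a b : R).
Hypothesis f_deriv : deriv_on f f' a b.

Lemma continuity_pt_clamp x :
  a <= x <= b -> continuity_pt (fun t => f (clamp a b t)) x.
Proof.
  intros Hx eps Heps.
  destruct (deriv_on_continuous _ _ _ _ _ f_deriv Hx eps Heps) as [d [Hd Hc]].
  exists d; split; [exact Hd|].
  intros y [_ Hy]; simpl in *; unfold R_dist in *.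
  assert (Hl := clamp_lipschitz a b y x ltac:(lra)).
  rewrite (clamp_id a b x Hx) in *.
  apply Hc; [apply clamp_range; lra | lra].
Qed.

Lemma derivable_pt_lim_clamp x :
  a < x < b -> derivable_pt_lim (fun t => f (clamp a b t)) x (f' x).
Proof.
  intros Hx eps Heps.
  destruct (f_deriv x (conj (Rlt_le _ _ (proj1 Hx)) (Rlt_le _ _ (proj2 Hx))) eps Heps)
    as [d [Hd Hq]].
  assert (Hpos : 0 < Rmin d (Rmin (x - a) (b - x))) by (repeat apply Rmin_pos; lra).
  exists (mkposreal _ Hpos); simpl; intros h Hh Hhd.
  assert (H1 := Rmin_l d (Rmin (x - a) (b - x))).
  assert (H2 := Rmin_r d (Rmin (x - a) (b - x))).
  assert (H3 := Rmin_l (x - a) (b - x)).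
  assert (H4 := Rmin_r (x - a) (b - x)).
  assert (Hxh : a <= x + h <= b) by (unfold Rabs in Hhd; destruct Rcase_abs; lra).
  rewrite !clamp_id by lra.
  specialize (Hq (x + h) Hxh).
  replace (x + h - x) with h in Hq by ring.
  apply Hq; lra.
Qed.

End Clamped.

(* Extending [f] by constants outside [a, b] turns one-sided derivatives into
   the two-sided ones that [null_derivative_loc] asks for. *)
Lemma deriv_on_0_constant f a b :
  deriv_on f (fun _ => 0) a b -> forall t, a <= t <= b -> f t = f a.
Proof.
  intros Hd t Ht.
  set (F := fun x => f (clamp a b x)).
  assert (pr : forall x, a < x < b -> derivable_pt F x)
    by (intros x Hx; exists 0; exact (derivable_pt_lim_clamp _ _ _ _ Hd x Hx)).
  assert (HF := null_derivative_loc F a b pr (continuity_pt_clamp _ _ _ _ Hd)).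
  assert (HFf : forall x, a <= x <= b -> F x = f x) by (intros x Hx; unfold F; now rewrite clamp_id).
  rewrite <- (HFf t Ht), <- (HFf a) by lra.
  apply HF; [|exact Ht].
  intros x Hx. unfold derive_pt. destruct (pr x Hx) as [l Hl]. simpl.
  apply (uniqueness_limite F x); [exact Hl | exact (derivable_pt_lim_clamp _ _ _ _ Hd x Hx)].
Qed.

Lemma deriv_on_affine f e a b :
  deriv_on f (fun _ => e) a b -> forall t, a <= t <= b -> f t = f a + e * (t - a).
Proof.
  intros Hd t Ht.
  assert (Hline : deriv_on (fun t => e * (t - a)) (fun _ => e) a b)
    by (apply is_derive_deriv_on; intro; auto_derive; auto; ring).
  assert (H := deriv_on_minus _ _ _ _ _ _ Hd Hline).
  apply deriv_on_ext with (f'' := fun _ => 0) in H; [|intros; ring].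
  assert (E := deriv_on_0_constant _ _ _ H t Ht). simpl in E. lra.
Qed.

Lemma partition_cover (ts : Z -> R) :
  (forall i, ts i < ts (i + 1)%Z) ->
  (forall M, exists N, forall i, (N <= i)%Z -> ts i > M) ->
  (forall M, exists N, forall i, (i <= N)%Z -> ts i < M) ->
  forall t, exists j, ts j <= t <= ts (j + 1)%Z.
Proof.
  intros Hinc Hp Hm t.
  destruct (Hp t) as [N1 H1], (Hm t) as [N2 H2].
  assert (K : forall n : nat, ts (N2 + Z.of_nat n)%Z > t -> exists j, ts j <= t <= ts (j + 1)%Z).
  { induction n as [|n IH]; intros Hn.
    - specialize (H2 N2 (Z.le_refl _)). rewrite Z.add_0_r in Hn. lra.
    - destruct (Rle_dec (ts (N2 + Z.of_nat n)%Z) t).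
      + exists (N2 + Z.of_nat n)%Z.
        replace (N2 + Z.of_nat n + 1)%Z with (N2 + Z.of_nat (S n))%Z by lia. lra.
      + apply IH; lra. }
  apply (K (Z.to_nat (Z.max N1 N2 - N2))), H1; lia.
Qed.

Section Invariance.
Variables (Z : PSVF) (L : pt -> Prop).

Definition confined (sigma : R -> pt) (a b : R) : Prop :=
  forall t0, a <= t0 <= b -> L (sigma t0) -> forall t, a <= t <= b -> L (sigma t).

Lemma confined_cat sigma a s b :
  a <= s <= b -> confined sigma a s -> confined sigma s b -> confined sigma a b.
Proof.
  intros Hs H1 H2 t0 Ht0 HL t Ht.
  assert (Ls : L (sigma s)).
  { destruct (Rle_dec t0 s); [apply (H1 t0) | apply (H2 t0)]; auto; lra. }
  destruct (Rle_dec t s); [apply (H1 s) | apply (H2 s)]; auto; lra.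
Qed.

Hypothesis confined_X : forall sigma a b, followsX Z sigma a b -> confined sigma a b.
Hypothesis confined_Y : forall sigma a b, followsY Z sigma a b -> confined sigma a b.
Hypothesis confined_T : forall sigma a b, followsT Z sigma a b -> confined sigma a b.

Lemma confined_any sigma a b : followsAny Z sigma a b -> confined sigma a b.
Proof. intros [H|[H|H]]; auto. Qed.

Lemma confined_local_trajectory sigma a b :
  local_trajectory Z sigma a b -> confined sigma a b.
Proof.
  intros [s [Hs H]]; cbv zeta in H.
  destruct H as [[_ H]|[[_ H]|[[_ [H1 H2]]|[[_ [H1 H2]]|[[_ [H1 H2]]|[[_ [H1 H2]]|
                 [[_ [H1 H2]]|[_ H]]]]]]]];
    try solve [auto | apply (confined_cat _ a s b Hs); auto using confined_any].
  intros t0 Ht0 HL t Ht. rewrite (H t Ht). now rewrite (H t0 Ht0) in HL.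
Qed.

Theorem invariant_of_confined_flows : invariant Z L.
Proof.
  intros gamma [ts [sig [Hinc [Hp [Hm [Hloc [Hcat Hg]]]]]]] H0 t.
  set (piece_in i := forall s, ts i <= s <= ts (i + 1)%Z -> L (sig i s)).
  assert (G : forall i, confined (sig i) (ts i) (ts (i + 1)%Z))
    by (intro; apply confined_local_trajectory, Hloc).
  assert (Hnext : forall i, piece_in i -> piece_in (i + 1)%Z).
  { intros i Hi s Hs. assert (Hi1 := Hinc i). assert (Hi2 := Hinc (i + 1)%Z).
    apply (G _ (ts (i + 1)%Z)); [lra| |exact Hs].
    rewrite <- Hcat. apply Hi; lra. }
  assert (Hprev : forall i, piece_in (i + 1)%Z -> piece_in i).
  { intros i Hi s Hs. assert (Hi1 := Hinc i). assert (Hi2 := Hinc (i + 1)%Z).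
    apply (G _ (ts (i + 1)%Z)); [lra| |exact Hs].
    rewrite Hcat. apply Hi; lra. }
  destruct (partition_cover ts Hinc Hp Hm 0) as [i0 Hi0].
  assert (Hall : forall n, piece_in (i0 + n)%Z).
  { apply Z.peano_ind.
    - rewrite Z.add_0_r. intros s Hs. apply (G i0 0 Hi0); [now rewrite <- Hg | exact Hs].
    - intros n Hn. rewrite <- Z.add_1_r, Z.add_assoc. now apply Hnext.
    - intros n Hn. apply Hprev. now replace (i0 + Z.pred n + 1)%Z with (i0 + n)%Z by lia. }
  destruct (partition_cover ts Hinc Hp Hm t) as [j Hj].
  rewrite (Hg j t Hj).
  replace j with (i0 + (j - i0))%Z by lia. apply Hall.
  now replace (i0 + (j - i0))%Z with j by lia.
Qed.

End Invariance.

Section GraphPair.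
Variables (P g : R -> R) (D : R -> Prop).
Hypothesis P_deriv : forall x, is_derive P x (g x).
Hypothesis D_iff : forall x, D x <-> 0 <= P x.

Definition Zgraph : PSVF :=
  mkPSVF (fun p => (1, g (fst p))) (fun p => (-1, g (fst p))).

Definition graph_pair (p : pt) : Prop :=
  exists x, D x /\ (p = (x, P x) \/ p = (x, - P x)).

Lemma graph_pair_half e p :
  e = 1 \/ e = -1 -> 0 <= e * snd p -> (graph_pair p <-> snd p - e * P (fst p) = 0).
Proof.
  destruct p as [x y]; simpl; intros He Hy; split.
  - intros [x' [Hx [E|E]]]; injection E as <- ->; apply D_iff in Hx;
      destruct He as [->| ->]; lra.
  - intros E; exists x; split; [apply D_iff|];
      destruct He as [->| ->]; [lra | lra | left; f_equal; lra | right; f_equal; lra].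
Qed.

Lemma first_integral e sigma a b :
  e = 1 \/ e = -1 -> integral_curve (fun p => (e, g (fst p))) sigma a b ->
  forall t, a <= t <= b ->
    snd (sigma t) - e * P (fst (sigma t)) = snd (sigma a) - e * P (fst (sigma a)).
Proof.
  intros He [Hx Hy]; simpl in Hx, Hy.
  set (x0 := fst (sigma a)).
  assert (Hline := deriv_on_affine _ _ _ _ Hx).
  assert (HP : deriv_on (fun t => e * P (x0 + e * (t - a))) (fun t => g (fst (sigma t))) a b).
  { apply deriv_on_ext with (f' := fun t => e * (e * g (x0 + e * (t - a)))).
    - apply is_derive_deriv_on; intro t.
      apply is_derive_scal, (is_derive_comp P (fun t => x0 + e * (t - a))); [apply P_deriv|].
      auto_derive; auto; ring.
    - intros t Ht. rewrite (Hline t Ht); fold x0. destruct He as [->| ->]; ring. }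
  assert (H := deriv_on_minus _ _ _ _ _ _ Hy HP).
  apply deriv_on_ext with (f'' := fun _ => 0) in H; [|intros; ring].
  intros t Ht. rewrite (Hline t Ht); fold x0.
  rewrite (deriv_on_0_constant _ _ _ H t Ht), Rminus_diag, Rmult_0_r, Rplus_0_r.
  reflexivity.
Qed.

Lemma confined_half e sigma a b :
  e = 1 \/ e = -1 -> integral_curve (fun p => (e, g (fst p))) sigma a b ->
  (forall t, a <= t <= b -> 0 <= e * snd (sigma t)) -> confined graph_pair sigma a b.
Proof.
  intros He Hc Hs t0 Ht0 HL t Ht.
  apply (graph_pair_half e); auto.
  rewrite (first_integral e sigma a b He Hc t Ht).
  rewrite <- (first_integral e sigma a b He Hc t0 Ht0).
  now apply (graph_pair_half e); auto.
Qed.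

Lemma Zgraph_no_sliding_escaping p : ~ (sliding Zgraph p \/ escaping Zgraph p).
Proof. unfold sliding, escaping, Lie1; simpl; lra. Qed.

Theorem graph_pair_invariant : invariant Zgraph graph_pair.
Proof.
  apply invariant_of_confined_flows.
  - intros sigma a b [Hc Hs]. apply (confined_half 1); auto.
    intros t Ht. specialize (Hs t Ht). lra.
  - intros sigma a b [Hc Hs]. apply (confined_half (-1)); auto.
    intros t Ht. specialize (Hs t Ht). lra.
  - intros sigma a b [_ Hse] t0 Ht0.
    destruct (Hse t0 Ht0 1 Rlt_0_1) as [q [Hq _]].
    now apply Zgraph_no_sliding_escaping in Hq.
Qed.

End GraphPair.

Lemma prod1_nonneg n g : (forall i, 0 <= g i) -> 0 <= prod1 n g.
Proof.
  intros Hg; induction n as [|n IH]; simpl; [lra|].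
  now apply Rmult_le_pos.
Qed.

Lemma prod1_pos n g : (forall i, (1 <= i <= n)%nat -> 0 < g i) -> 0 < prod1 n g.
Proof.
  induction n as [|n IH]; intros Hg; simpl; [lra|].
  apply Rmult_lt_0_compat; [apply IH; intros; apply Hg | apply Hg]; lia.
Qed.

Lemma ex_derive_prod1 (h : nat -> R -> R) n x :
  (forall i, ex_derive (h i) x) -> ex_derive (fun y => prod1 n (fun i => h i y)) x.
Proof.
  intros Hh; induction n as [|n IH]; simpl.
  - apply ex_derive_const.
  - now apply ex_derive_mult.
Qed.

Lemma Pk_is_derive k x : is_derive (Pk k) x (Derive (Pk k) x).
Proof.
  apply Derive_correct, ex_derive_mult; [auto_derive; auto|].
  apply (ex_derive_prod1 (fun i y => (y - (INR i - INR k / 2)) ^ 2)).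
  intro; auto_derive; auto.
Qed.

(* Outside [r0 k, r1 k] the squared factors are positive: their roots [i - k/2],
   1 <= i <= k-1, lie strictly inside. *)
Lemma Pk_nonneg_iff k x : (2 <= k)%nat -> (r0 k <= x <= r1 k <-> 0 <= Pk k x).
Proof.
  intros Hk; unfold Pk, r0, r1.
  assert (Hk2 : 2 <= INR k) by (apply (le_INR 2) in Hk; simpl in Hk; lra).
  set (Q := prod1 _ _).
  assert (HQ : 0 <= Q) by (apply prod1_nonneg; intro; apply pow2_ge_0).
  split.
  - intros Hx. apply Rmult_le_pos; [nra | exact HQ].
  - intros HP.
    destruct (Rlt_or_le x ((1 - INR k) / 2)), (Rlt_or_le ((INR k - 1) / 2) x); [| | |lra];
      exfalso;
      (assert (HQ' : 0 < Q);
       [ apply prod1_pos; intros i Hi;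
         assert (1 <= INR i) by (apply (le_INR 1); lia);
         assert (INR i + 1 <= INR k) by (rewrite <- S_INR; apply le_INR; lia);
         apply pow2_gt_0; lra
       | ]);
      assert (0 < (x + (INR k - 1) / 2) * (x - (INR k - 1) / 2) * Q)
        by (apply Rmult_lt_0_compat; [nra | exact HQ']);
      lra.
Qed.

Lemma Pinf_is_derive x : is_derive Pinf x (2 * sin (2 * PI * x)).
Proof.
  assert (HPI := PI_RGT_0).
  unfold Pinf; auto_derive; auto; field; lra.
Qed.

Lemma Pinf_nonneg x : 0 <= Pinf x.
Proof.
  assert (HPI := PI_RGT_0). assert (Hcos := COS_bound (2 * PI * x)).
  unfold Pinf. apply Rdiv_le_0_compat; lra.
Qed.

Lemma invariant_ext Z L L' :
  (forall p, L p <-> L' p) -> invariant Z L -> invariant Z L'.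
Proof. intros E H gamma Hg H0 t. apply E, (H gamma Hg), E, H0. Qed.

Theorem mainTheorem10 :
  (forall k : nat, (2 <= k)%nat -> invariant (Zk k) (Lambdak k)) /\
  invariant Zinf Lambdainf.
Proof.
  split.
  - intros k Hk.
    exact (graph_pair_invariant (Pk k) (Derive (Pk k)) (fun x => r0 k <= x <= r1 k)
             (Pk_is_derive k) (fun x => Pk_nonneg_iff k x Hk)).
  - apply (invariant_ext _ (graph_pair Pinf (fun _ => True))).
    + intro p; split; [intros [x [_ H]] | intros [x H]]; now exists x.
    + apply (graph_pair_invariant Pinf (fun x => 2 * sin (2 * PI * x)));
        [exact Pinf_is_derive|].
      intro x; split; [intros _; apply Pinf_nonneg | trivial].
Qed.
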